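(* Let $\mathfrak g$ be a $7$-dimensional real Lie algebra and $\pi\colon\mathfrak g\to\mathfrak h$ a Lie algebra epimorphism onto a $6$-dimensional Lie algebra $\mathfrak h$ with $\ker\pi$ contained in the center of $\mathfrak g$. Suppose $\mathfrak h$ admits no symplectic form. Then for a generator $X$ of $\ker\pi$ one has $(X\lrcorner\,\phi)^3=0$ for every closed $\phi\in\Lambda^3\mathfrak g^*$; in particular $\mathfrak g$ admits no calibrated $\mathrm{G}_2$-structure.
   Context: $d$ denotes the Chevalley–Eilenberg differential. A symplectic form on a $6$-dimensional Lie algebra is a closed $2$-form $\omega$ with $\omega^3\neq0$. A $3$-form $\varphi$ on a $7$-dimensional Lie algebra defines a $\mathrm{G}_2$-structure if in some basis $f^1,\dots,f^7$ of $\mathfrak g^*$ it equals $f^{127}+f^{347}+f^{567}+f^{135}-f^{236}-f^{146}-f^{245}$; it is calibrated if $d\varphi=0$. *)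

From HB Require Import structures.
From mathcomp Require Import all_boot all_order all_algebra all_fingroup.
Set Implicit Arguments. Unset Strict Implicit. Unset Printing Implicit Defensive.
Import Order.TTheory GRing.Theory Num.Theory.
Local Open Scope ring_scope.

Section LieForms.
Variable R : realFieldType.

Definition lie_bracket n (br : 'rV[R]_n -> 'rV[R]_n -> 'rV[R]_n) : Prop :=
  [/\ forall a x y z, br (a *: x + y) z = a *: br x z + br y z,
      forall a x y z, br x (a *: y + z) = a *: br x y + br x z,
      forall x, br x x = 0 &
      forall x y z, br x (br y z) + br y (br z x) + br z (br x y) = 0].

Definition kform n k := ('I_k -> 'rV[R]_n) -> R.

Definition kupd n k (v : 'I_k -> 'rV[R]_n) (i : 'I_k) (w : 'rV[R]_n) :=
  fun t => if t == i then w else v t.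

Definition kmultilinear n k (f : kform n k) : Prop :=
  forall v i a x y, f (kupd v i (a *: x + y)) = a * f (kupd v i x) + f (kupd v i y).

Definition kalternating n k (f : kform n k) : Prop :=
  forall (v : 'I_k -> 'rV[R]_n) (i j : 'I_k), i != j -> v i = v j -> f v = 0.

Definition is_kform n k (f : kform n k) : Prop := kmultilinear f /\ kalternating f.

Definition kwedge n p q (a : kform n p) (b : kform n q) : kform n (p + q) :=
  fun v => (p`!%:R * q`!%:R)^-1 *
    \sum_(s : 'S_(p + q)) (-1) ^+ (odd_perm s) *
       a (fun i => v (s (lshift q i))) * b (fun j => v (s (rshift p j))).

(* Chevalley--Eilenberg differential:
   dphi(x_0..x_k) = sum_{i<j} (-1)^(i+j) phi([x_i,x_j], x_0,..^i..^j..,x_k) *)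
Definition ce_d n k (br : 'rV[R]_n -> 'rV[R]_n -> 'rV[R]_n) (phi : kform n k)
  : kform n k.+1 :=
  fun x => \sum_(i < k.+1) \sum_(j < k.+1 | (i < j)%N)
    (-1) ^+ (i + j) *
      phi (fun t => if val t == 0%N then br (x i) (x j)
                    else nth 0 [seq x l | l <- enum 'I_k.+1 & (l != i) && (l != j)]
                           (val t).-1).

Definition ce_closed n k br (phi : kform n k) : Prop := forall x, ce_d br phi x = 0.

Definition kcontract n k (X : 'rV[R]_n) (phi : kform n k.+1) : kform n k :=
  fun v => phi (fun t => if unlift ord0 t is Some t' then v t' else X).

Definition kcube n (w : kform n 2) : kform n (2 + (2 + 2)) := kwedge w (kwedge w w).

Definition lie_symplectic n br (w : kform n 2) : Prop :=
  [/\ is_kform w, ce_closed br w & exists v, kcube w v <> 0].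

(* dual basis f^1..f^7 given by the columns of an invertible matrix B *)
Definition dualf (B : 'M[R]_7) (i : nat) : kform 7 1 :=
  fun v => (v ord0 *m B) 0 (inord i).

(* f^{ijk} with paper's 1-based indices *)
Definition f3 (B : 'M[R]_7) (i j k : nat) : kform 7 3 :=
  kwedge (dualf B i.-1) (kwedge (dualf B j.-1) (dualf B k.-1)).

Definition G2_std (B : 'M[R]_7) : kform 7 3 := fun v =>
  f3 B 1 2 7 v + f3 B 3 4 7 v + f3 B 5 6 7 v + f3 B 1 3 5 v
  - f3 B 2 3 6 v - f3 B 1 4 6 v - f3 B 2 4 5 v.

Definition lie_G2_structure (phi : kform 7 3) : Prop :=
  exists B : 'M[R]_7, B \in unitmx /\ forall v, phi v = G2_std B v.

Definition lie_calibrated_G2 br (phi : kform 7 3) : Prop :=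
  lie_G2_structure phi /\ ce_closed br phi.

End LieForms.

From HB Require Import structures.
From mathcomp Require Import all_boot all_order all_algebra all_fingroup.
From mathcomp Require Import ring.
From Stdlib Require Import FunctionalExtensionality.
Set Implicit Arguments. Unset Strict Implicit. Unset Printing Implicit Defensive.
Import GRing.Theory Num.Theory.
Local Open Scope ring_scope.

(* Contracting a closed 3-form phi on g with the central generator X of ker pi
   gives a closed 2-form X _| phi which vanishes on X; it therefore descends along
   pi to a closed 2-form omega on h with pi^* omega = X _| phi, so that
   (X _| phi)^3 = pi^* (omega^3) and omega^3 <> 0 would make omega symplectic.
   For the standard G2 form, on the other hand, (X _| phi)^3 evaluated on the
   basis vectors e_l, l <> j, is 6 times a Pfaffian equal to +-|X|^2 X_j, which
   is nonzero as soon as the coordinate X_j is. *)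

Section PermExpansion.
Variable R : comPzRingType.

Fixpoint sum_lt (n : nat) (F : nat -> R) : R :=
  if n is n'.+1 then sum_lt n' F + F n' else 0.

Lemma sum_ltE n F : sum_lt n F = \sum_(i < n) F i.
Proof. by elim: n => [|n IHn]; rewrite ?big_ord0 //= big_ord_recr IHn. Qed.

Definition lift_fun (N j : nat) (f : nat -> nat) (k : nat) : nat :=
  if k is k'.+1 then (if (k' < N)%N then bump j (f k') else 0%N) else j.

(* [perm_expand N G] is [\sum_(s : 'S_N) (-1) ^+ s * G (perm_fun s)] (see
   [perm_expandE]) written as nested sums over nat, which [simpl] evaluates
   when [N] is a numeral. *)
Fixpoint perm_expand (N : nat) (G : (nat -> nat) -> R) : R :=
  if N is N'.+1 then
    sum_lt N (fun j => (-1) ^+ j * perm_expand N' (fun f => G (lift_fun N' j f)))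
  else G (fun=> 0%N).

Lemma perm_expandS N G : perm_expand N.+1 G =
  \sum_(j < N.+1) (-1) ^+ j * perm_expand N (fun f => G (lift_fun N j f)).
Proof. exact: sum_ltE. Qed.

Lemma perm_expandZ N c G : perm_expand N (fun f => c * G f) = c * perm_expand N G.
Proof.
elim: N G => [//|N IH] G; rewrite !perm_expandS big_distrr; apply: eq_bigr => j _.
by rewrite IH mulrCA.
Qed.

Definition perm_fun N (s : 'S_N) (k : nat) : nat :=
  if insub k is Some i then val (s i) else 0%N.

Lemma perm_fun_val N (s : 'S_N) (k : 'I_N) : perm_fun s k = s k.
Proof. by rewrite /perm_fun valK. Qed.

Lemma sum_perm_lift n (F : 'S_n.+1 -> R) :
  \sum_(s : 'S_n.+1) F s = \sum_(j : 'I_n.+1) \sum_(t : 'S_n) F (lift_perm ord0 j t).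
Proof.
pose h (p : 'I_n.+1 * 'S_n) := lift_perm ord0 p.1 p.2.
have h_inj : injective h.
  move=> [j t] [j' t'] /permP eq_h.
  have jj' : j = j' by have := eq_h ord0; rewrite /h !lift_perm_id.
  subst j'; congr (_, _); apply/permP => k; apply: (@lift_inj _ j).
  by have := eq_h (lift ord0 k); rewrite /h !lift_perm_lift.
rewrite pair_bigA /= (reindex h) //; apply/onW_bij/inj_card_bij => //.
by rewrite card_prod card_ord !card_Sn factS.
Qed.

Lemma perm_fun_lift N (j : 'I_N.+1) (t : 'S_N) :
  perm_fun (lift_perm ord0 j t) = lift_fun N j (perm_fun t).
Proof.
apply: functional_extensionality => -[|k]; rewrite /perm_fun /lift_fun.
  by rewrite insubT /= (_ : Sub _ _ = ord0) ?lift_perm_id //; apply: val_inj.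
case: insubP => [i lt_kN Ei|]; last by rewrite ltnS leqNgt => /negbNE ->.
have lt_kN' : (k < N)%N by [].
rewrite lt_kN' insubT /= (_ : i = lift ord0 (Ordinal lt_kN')); last exact: val_inj.
by rewrite lift_perm_lift.
Qed.

Lemma perm_expandE N (G : (nat -> nat) -> R) :
  \sum_(s : 'S_N) (-1) ^+ s * G (perm_fun s) = perm_expand N G.
Proof.
elim: N G => [|N IH] G.
  rewrite (big_pred1 1%g) => [|s]; last by apply/esym/eqP/permP => -[].
  rewrite odd_perm1 mul1r /=; congr G.
  by apply: functional_extensionality => k; rewrite /perm_fun; case: insubP => // -[].
rewrite sum_perm_lift perm_expandS; apply: eq_bigr => j _.
rewrite -IH big_distrr /=; apply: eq_bigr => t _.
by rewrite odd_lift_perm perm_fun_lift signr_addb mulrA signr_odd.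
Qed.

Definition pfaffian4 (M : nat -> nat -> R) (i j k l : nat) : R :=
  M i j * M k l - M i k * M j l + M i l * M j k.

Definition pfaffian6 (M : nat -> nat -> R) : R :=
  M 0 1 * pfaffian4 M 2 3 4 5 - M 0 2 * pfaffian4 M 1 3 4 5 + M 0 3 * pfaffian4 M 1 2 4 5
  - M 0 4 * pfaffian4 M 1 2 3 5 + M 0 5 * pfaffian4 M 1 2 3 4.

Lemma perm_expand_pfaffian6 (M : nat -> nat -> R) :
  (forall a b, M a b = - M b a) ->
  perm_expand 6 (fun f => M (f 0) (f 1) * pfaffian4 (fun a b => M (f a) (f b)) 2 3 4 5)
  = 144 * pfaffian6 M.
Proof.
move=> skew; rewrite /pfaffian6 /pfaffian4 /= /lift_fun /bump /=.
rewrite (skew 1 0) (skew 2 0) (skew 3 0) (skew 4 0) (skew 5 0) (skew 2 1) (skew 3 1)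
  (skew 4 1) (skew 5 1) (skew 3 2) (skew 4 2) (skew 5 2) (skew 4 3) (skew 5 3) (skew 5 4).
ring.
Qed.

Lemma eq_pfaffian6 (M M' : nat -> nat -> R) :
  (forall a b, (a < 6)%N -> (b < 6)%N -> M a b = M' a b) -> pfaffian6 M = pfaffian6 M'.
Proof. by move=> MM'; rewrite /pfaffian6 /pfaffian4 !MM'. Qed.

End PermExpansion.

Section Forms.
Variable R : realFieldType.
Implicit Types (n : nat).

Section KUpdate.
Variables (n k : nat).
Implicit Types (f : kform R n k) (v : 'I_k -> 'rV[R]_n).

Lemma kupd_id v i : kupd v i (v i) = v.
Proof. by apply: functional_extensionality => t; rewrite /kupd; case: eqP => // ->. Qed.

Lemma kupdC v (i j : 'I_k) x y :
  i != j -> kupd (kupd v i x) j y = kupd (kupd v j y) i x.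
Proof.
move=> ij; apply: functional_extensionality => t; rewrite /kupd.
by case: eqP => [->|//]; rewrite eq_sym (negbTE ij).
Qed.

Lemma kmultilinearD f v i x y : kmultilinear f ->
  f (kupd v i (x + y)) = f (kupd v i x) + f (kupd v i y).
Proof. by move=> fL; rewrite -[x]scale1r fL mul1r scale1r. Qed.

Lemma kmultilinear_kupd0 f v i : kmultilinear f -> f (kupd v i 0) = 0.
Proof.
move=> fL; apply: (@addrI _ (f (kupd v i 0))).
by rewrite addr0 -kmultilinearD // addr0.
Qed.

Lemma kform_swap f v (i j : 'I_k) x y : is_kform f -> i != j ->
  f (kupd (kupd v i x) j y) = - f (kupd (kupd v i y) j x).
Proof.
case=> fL fA ij; pose g p q := f (kupd (kupd v i p) j q).
have gDl p p' q : g (p + p') q = g p q + g p' q by rewrite /g !(kupdC _ _ _ ij) kmultilinearD.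
have gDr p q q' : g p (q + q') = g p q + g p q' by rewrite /g kmultilinearD.
have g0 p : g p p = 0.
  by apply: (fA _ i j ij); rewrite /kupd !eqxx (negbTE ij).
apply/eqP; rewrite -addr_eq0; apply/eqP.
by have := g0 (x + y); rewrite gDl !gDr !g0 add0r addr0.
Qed.

End KUpdate.

Definition nthv n k (L : seq 'rV[R]_n) : 'I_k -> 'rV[R]_n := fun i => nth 0 L i.

Definition ev1 n (a : kform R n 1) x := a (nthv [:: x]).
Definition ev2 n (w : kform R n 2) x y := w (nthv [:: x; y]).
Definition ev3 n (phi : kform R n 3) x y z := phi (nthv [:: x; y; z]).

Lemma nthv3E n (x : 'I_3 -> 'rV[R]_n) :
  x = nthv [:: x (inord 0); x (inord 1); x (inord 2)].
Proof.
apply: functional_extensionality => -[[|[|[|//]]] i3] /=;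
  by congr x; apply: val_inj; rewrite /= inordK.
Qed.

Lemma kwedge_nthv n p q (a : kform R n p) (b : kform R n q) (L : seq 'rV[R]_n) :
  kwedge a b (nthv L) = (p`!%:R * q`!%:R)^-1 *
    perm_expand (p + q) (fun f => a (nthv (mkseq (fun i => nth 0 L (f i)) p)) *
                                 b (nthv (mkseq (fun j => nth 0 L (f (p + j)%N)) q))).
Proof.
rewrite /kwedge -perm_expandE; congr (_ * _); apply: eq_bigr => s _.
rewrite -mulrA; congr (_ * (a _ * b _)); apply: functional_extensionality => i;
  by rewrite /nthv nth_mkseq // -perm_fun_val.
Qed.

Ltac expand_perm := rewrite /= /mkseq /lift_fun /bump /=.

Lemma kwedge11E n (a b : kform R n 1) x y :
  kwedge a b (nthv [:: x; y]) = ev1 a x * ev1 b y - ev1 a y * ev1 b x.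
Proof.
rewrite kwedge_nthv -natrM (_ : (1`! * 1`!)%N = 1%N) // invr1 mul1r.
by expand_perm; rewrite /ev1; ring.
Qed.

Lemma kwedge12E n (a b c : kform R n 1) x y z :
  kwedge a (kwedge b c) (nthv [:: x; y; z]) =
    ev1 a x * (ev1 b y * ev1 c z - ev1 b z * ev1 c y)
  - ev1 a y * (ev1 b x * ev1 c z - ev1 b z * ev1 c x)
  + ev1 a z * (ev1 b x * ev1 c y - ev1 b y * ev1 c x).
Proof.
rewrite kwedge_nthv -natrM (_ : (1`! * 2`!)%N = 2%N) //.
apply: (canLR (mulKf _)); first by rewrite pnatr_eq0.
expand_perm; rewrite !kwedge11E /ev1; ring.
Qed.

Lemma ev2_skew n (w : kform R n 2) x y : is_kform w -> ev2 w x y = - ev2 w y x.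
Proof.
move=> wF; pose v : 'I_2 -> 'rV[R]_n := nthv [:: x; y].
have E p q : kupd (kupd v ord0 p) ord_max q = nthv [:: p; q].
  by apply: functional_extensionality => -[[|[|//]] ?].
by rewrite /ev2 -(E x y) -(E y x) kform_swap.
Qed.

Lemma ev3_swap n (phi : kform R n 3) x y z : is_kform phi ->
  ev3 phi x y z = - ev3 phi y x z.
Proof.
move=> phiF; pose v : 'I_3 -> 'rV[R]_n := nthv [:: x; y; z].
have E p q : kupd (kupd v ord0 p) (inord 1) q = nthv [:: p; q; z].
  by apply: functional_extensionality => -[[|[|[|//]]] ?]; rewrite /kupd -val_eqE /= inordK.
by rewrite /ev3 -(E x y) -(E y x) kform_swap // -val_eqE /= inordK.
Qed.

Lemma ev3_0 n (phi : kform R n 3) y z : kmultilinear phi -> ev3 phi 0 y z = 0.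
Proof.
move=> phiL; rewrite -(kmultilinear_kupd0 (nthv [:: 0; y; z]) ord0 phiL).
by congr phi; apply: functional_extensionality => -[[|[|[|//]]] ?].
Qed.

Lemma kwedge22E n (w : kform R n 2) (L : seq 'rV[R]_n) : is_kform w ->
  kwedge w w (nthv L) = 2 * pfaffian4 (fun i j => ev2 w (nth 0 L i) (nth 0 L j)) 0 1 2 3.
Proof.
move=> wF; rewrite kwedge_nthv -natrM (_ : (2`! * 2`!)%N = 4%N) //.
apply: (canLR (mulKf _)); first by rewrite pnatr_eq0.
expand_perm; rewrite -!/(ev2 _ _ _) /pfaffian4.
have sk i j : ev2 w (nth 0 L i) (nth 0 L j) = - ev2 w (nth 0 L j) (nth 0 L i).
  exact: ev2_skew.
by rewrite (sk 1 0) (sk 2 0) (sk 3 0) (sk 2 1) (sk 3 1) (sk 3 2); ring.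
Qed.

Lemma kcube_pfaffian n (w : kform R n 2) (L : seq 'rV[R]_n) : is_kform w ->
  kcube w (nthv L) = 6 * pfaffian6 (fun i j => ev2 w (nth 0 L i) (nth 0 L j)).
Proof.
move=> wF; rewrite /kcube kwedge_nthv -natrM (_ : (2`! * (2 + 2)`!)%N = 48%N) //.
apply: (canLR (mulKf _)); first by rewrite pnatr_eq0.
rewrite (_ : (fun f => _) = fun f => 2 * (ev2 w (nth 0 L (f 0%N)) (nth 0 L (f 1%N)) *
    pfaffian4 (fun i j => ev2 w (nth 0 L (f i)) (nth 0 L (f j))) 2 3 4 5)).
  rewrite perm_expandZ (perm_expand_pfaffian6 (M := fun i j => ev2 w (nth 0 L i) (nth 0 L j))).
    by ring.
  by move=> i j; exact: ev2_skew.
by apply: functional_extensionality => f; rewrite /mkseq /= kwedge22E // mulrCA.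
Qed.

Definition kcons n k (X : 'rV[R]_n) (v : 'I_k -> 'rV[R]_n) : 'I_k.+1 -> 'rV[R]_n :=
  fun t => if unlift ord0 t is Some t' then v t' else X.

Lemma kcontractE n k (X : 'rV[R]_n) (phi : kform R n k.+1) v :
  kcontract X phi v = phi (kcons X v).
Proof. by []. Qed.

Lemma kcons_nthv n k (X : 'rV[R]_n) L : kcons X (nthv L) = nthv (X :: L) :> ('I_k.+1 -> _).
Proof. by apply: functional_extensionality => t; rewrite /kcons; case: unliftP => [t'|] ->. Qed.

Lemma kcons_kupd n k (X : 'rV[R]_n) (v : 'I_k -> _) i y :
  kcons X (kupd v i y) = kupd (kcons X v) (lift ord0 i) y.
Proof.
apply: functional_extensionality => t; rewrite /kcons /kupd.
case: (unliftP ord0 t) => [t'|] ->; first by rewrite (inj_eq lift_inj).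
by rewrite (negbTE (neq_lift _ _)).
Qed.

Lemma kcontract_is_kform n k (X : 'rV[R]_n) (phi : kform R n k.+1) :
  is_kform phi -> is_kform (kcontract X phi).
Proof.
case=> phiL phiA; split=> [v i a x y | v i j ij vij].
  by rewrite !kcontractE !kcons_kupd phiL.
apply: (phiA _ (lift ord0 i) (lift ord0 j)); first by rewrite (inj_eq lift_inj).
by rewrite /kcons !liftK.
Qed.

Lemma kcontract_kupd_self n k (X : 'rV[R]_n) (phi : kform R n k.+1) v i :
  kalternating phi -> kcontract X phi (kupd v i X) = 0.
Proof.
move=> phiA; apply: (phiA _ ord0 (lift ord0 i)); first exact: neq_lift.
by rewrite /kcons liftK unlift_none /kupd eqxx.
Qed.

Definition kpullback n m k (T : 'M[R]_(n, m)) (f : kform R m k) : kform R n k :=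
  fun v => f (fun t => v t *m T).

Lemma kpullback_is_kform n m k (T : 'M[R]_(n, m)) (f : kform R m k) :
  is_kform f -> is_kform (kpullback T f).
Proof.
case=> fL fA; split=> [v i a x y | v i j ij vij].
  have E z : (fun t => kupd v i z t *m T) = kupd (fun t => v t *m T) i (z *m T).
    by apply: functional_extensionality => t; rewrite /kupd; case: eqP.
  by rewrite /kpullback !E mulmxDl -scalemxAl fL.
by apply: (fA _ i j ij); rewrite /= vij.
Qed.

Lemma kwedge_kpullback n m p q (T : 'M[R]_(n, m)) (a : kform R m p) (b : kform R m q) :
  kwedge (kpullback T a) (kpullback T b) = kpullback T (kwedge a b).
Proof. by apply: functional_extensionality. Qed.

Lemma kcube_kpullback n m (T : 'M[R]_(n, m)) (w : kform R m 2) :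
  kcube (kpullback T w) = kpullback T (kcube w).
Proof. by rewrite /kcube !kwedge_kpullback. Qed.

Lemma ce_d_nthv n k br (phi : kform R n k) L :
  ce_d br phi (nthv L) = sum_lt k.+1 (fun i => sum_lt k.+1 (fun j =>
    if (i < j)%N then (-1) ^+ (i + j) * phi (nthv (br (nth 0 L i) (nth 0 L j) ::
      [seq nth 0 L l | l <- iota 0 k.+1 & (l != i) && (l != j)])) else 0)).
Proof.
rewrite sum_ltE; apply: eq_bigr => i _; rewrite sum_ltE big_mkcond; apply: eq_bigr => j _.
case: ifP => // _; rewrite -[in RHS]val_enum_ord [in RHS]filter_map -[in RHS]map_comp.
by congr (_ * phi _); apply: functional_extensionality => -[[|t] ?].
Qed.

Lemma ce_d2E n br (w : kform R n 2) x y z :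
  ce_d br w (nthv [:: x; y; z]) =
  - ev2 w (br x y) z + ev2 w (br x z) y - ev2 w (br y z) x.
Proof. by rewrite ce_d_nthv /= /ev2; ring. Qed.

Lemma ce_d3E n br (phi : kform R n 3) x y z u :
  ce_d br phi (nthv [:: x; y; z; u]) =
  - ev3 phi (br x y) z u + ev3 phi (br x z) y u - ev3 phi (br x u) y z
  - ev3 phi (br y z) x u + ev3 phi (br y u) x z - ev3 phi (br z u) x y.
Proof. by rewrite ce_d_nthv /= /ev3; ring. Qed.

Lemma ce_d_kpullback n m k (T : 'M[R]_(n, m)) brn brm (f : kform R m k) x :
  (forall y z, brn y z *m T = brm (y *m T) (z *m T)) ->
  ce_d brn (kpullback T f) x = ce_d brm f (fun t => x t *m T).
Proof.
move=> homT; apply: eq_bigr => i _; apply: eq_bigr => j _; congr (_ * f _).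
apply: functional_extensionality => t; case: eqP => _; first exact: homT.
rewrite (map_comp (mulmxr T) x).
by elim: (map x _) (val t).-1 => [|y s IHs] [|l] //=; rewrite mul0mx.
Qed.

(* Cartan's formula [L_X = d i_X + i_X d], where [L_X = 0] because [ad X = 0]. *)
Lemma kcontract_central_closed n br (phi : kform R n 3) X :
  is_kform phi -> ce_closed br phi -> (forall y, br X y = 0) ->
  ce_closed br (kcontract X phi).
Proof.
move=> phiF phi_closed central x; rewrite (nthv3E x) ce_d2E /ev2 !kcontractE !kcons_nthv.
have := phi_closed (nthv [:: X; x (inord 0); x (inord 1); x (inord 2)]).
rewrite ce_d3E !central !ev3_0; try by case: phiF.
rewrite ![ev3 phi (br _ _) X _]ev3_swap // /ev3 => dphi0.
by rewrite -[RHS]oppr0 -dphi0; ring.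
Qed.

Lemma kmultilinear_kupd_shift n k (f : kform R n k) X v i a y :
  kmultilinear f -> (forall v i, f (kupd v i X) = 0) ->
  f (kupd v i (a *: X + y)) = f (kupd v i y).
Proof. by move=> fL fX; rewrite fL fX mulr0 add0r. Qed.

Lemma kform_span_invariant n k (f : kform R n k) X (T : 'M[R]_n) u :
  kmultilinear f -> (forall v i, f (kupd v i X) = 0) ->
  (forall w, exists a, w = a *: X + w *m T) ->
  f (fun t => u t *m T) = f u.
Proof.
move=> fL fX TX.
pose u_ m := fun t : 'I_k => if (t < m)%N then u t *m T else u t.
suff: forall m, (m <= k)%N -> f (u_ m) = f u.
  move/(_ k (leqnn k)); congr (f _ = _).
  by apply: functional_extensionality => t; rewrite /u_ ltn_ord.
elim=> [_|m IHm lt_mk]; first by congr f; apply: functional_extensionality.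
pose i := Ordinal lt_mk; have [a uiE] := TX (u i).
have -> : u_ m.+1 = kupd (u_ m) i (u i *m T).
  apply: functional_extensionality => t; rewrite /u_ /kupd.
  case: (eqVneq t i) => [-> | /negbTE ti]; first by rewrite /= ltnSn.
  by rewrite ltnS leq_eqVlt -[val t == m]/(t == i) ti.
rewrite -(kmultilinear_kupd_shift _ _ a _ fL fX) -uiE.
have umi : u_ m i = u i by rewrite /u_ /= ltnn.
by rewrite -{1}umi kupd_id IHm // ltnW.
Qed.

Lemma ker_span_neq0 m n (P : 'M[R]_(m, n)) (X : 'rV[R]_m) : (n < m)%N ->
  (forall z, z *m P = 0 -> exists a, z = a *: X) -> X != 0.
Proof.
move=> lt_nm kerP_span; apply/eqP => X0.
have ker0 : kermx P = 0.
  apply/row_matrixP => i; rewrite row0.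
  have [|a ->] := kerP_span (row i (kermx P)); first by rewrite -row_mul mulmx_ker row0.
  by rewrite X0 scaler0.
have := mxrank_ker P; rewrite ker0 mxrank0 => /esym/eqP; rewrite subn_eq0 => le_m_rk.
by have := leq_trans le_m_rk (rank_leq_col P); rewrite leqNgt lt_nm.
Qed.

Section Descent.
Variables (n m : nat) (brg : 'rV[R]_n -> 'rV[R]_n -> 'rV[R]_n)
  (brh : 'rV[R]_m -> 'rV[R]_m -> 'rV[R]_m) (P : 'M[R]_(n, m)) (Q : 'M[R]_(m, n))
  (X : 'rV[R]_n).
Hypotheses (QP : Q *m P = 1%:M) (XP : X *m P = 0)
  (kerP_span : forall z, z *m P = 0 -> exists a, z = a *: X)
  (P_hom : forall x y, brg x y *m P = brh (x *m P) (y *m P))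
  (kerP_central : forall z, z *m P = 0 -> forall y, brg z y = 0).

Definition descend (phi : kform R n 3) : kform R m 2 := kpullback Q (kcontract X phi).

Lemma kpullback_descend phi : is_kform phi -> kpullback P (descend phi) = kcontract X phi.
Proof.
move=> phiF; have [omegaL _] := kcontract_is_kform X phiF.
apply: functional_extensionality => u; rewrite /descend /kpullback.
rewrite -[RHS](kform_span_invariant (X := X) (T := P *m Q) u omegaL).
- by congr (kcontract X phi); apply: functional_extensionality => t; rewrite mulmxA.
- by move=> v i; apply: kcontract_kupd_self; case: phiF.
move=> w; have [|a wE] := kerP_span (z := w - w *m (P *m Q)).
  by rewrite mulmxBl -!mulmxA QP mulmx1 subrr.
by exists a; rewrite -wE subrK.
Qed.

Lemma descend_is_kform phi : is_kform phi -> is_kform (descend phi).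
Proof. by move=> phiF; apply/kpullback_is_kform/kcontract_is_kform. Qed.

Lemma descend_closed phi : is_kform phi -> ce_closed brg phi -> ce_closed brh (descend phi).
Proof.
move=> phiF phi_closed x.
have -> : x = fun t => x t *m Q *m P.
  by apply: functional_extensionality => t; rewrite -mulmxA QP mulmx1.
rewrite -(ce_d_kpullback (brn := brg)) // kpullback_descend //.
exact: (kcontract_central_closed phiF phi_closed (kerP_central XP)).
Qed.

Lemma kcube_kcontract_eq0 phi v :
  ~ (exists w : kform R m 2, lie_symplectic brh w) ->
  is_kform phi -> ce_closed brg phi -> kcube (kcontract X phi) v = 0.
Proof.
move=> not_symplectic phiF phi_closed; apply/eqP/negPn/negP => cube_nz.
apply: not_symplectic; exists (descend phi).
split; [exact: descend_is_kform | exact: descend_closed | exists (fun t => v t *m P)].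
rewrite -[kcube _ _]/(kpullback P (kcube (descend phi)) v) -kcube_kpullback.
by rewrite kpullback_descend //; apply/eqP.
Qed.

End Descent.

End Forms.

Section G2.
Variable R : realFieldType.
Implicit Types (B : 'M[R]_7) (c : nat -> nat -> R).

Definition dual_coord B (l : nat) (x : 'rV[R]_7) : R := (x *m B) 0 (inord l).

Lemma dual_coordD B l a x y :
  dual_coord B l (a *: x + y) = a * dual_coord B l x + dual_coord B l y.
Proof. by rewrite /dual_coord mulmxDl -scalemxAl !mxE. Qed.

(* [c s l] is the [l]-th coordinate of the [s]-th argument. *)
Definition minor3 c (i j k : nat) : R :=
    c 0 i * (c 1 j * c 2 k - c 2 j * c 1 k)
  - c 1 i * (c 0 j * c 2 k - c 2 j * c 0 k)
  + c 2 i * (c 0 j * c 1 k - c 1 j * c 0 k).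

Definition g2_coord c : R :=
  minor3 c 0 1 6 + minor3 c 2 3 6 + minor3 c 4 5 6 + minor3 c 0 2 4
  - minor3 c 1 2 5 - minor3 c 0 3 5 - minor3 c 1 3 4.

Lemma eq_g2_coord c c' :
  (forall s l, (s < 3)%N -> (l < 7)%N -> c s l = c' s l) -> g2_coord c = g2_coord c'.
Proof. by move=> cc'; rewrite /g2_coord /minor3 !cc'. Qed.

Lemma G2_std_nthv B x y z :
  G2_std B (nthv [:: x; y; z]) = g2_coord (fun s l => dual_coord B l (nth 0 [:: x; y; z] s)).
Proof. by rewrite /G2_std /f3 !kwedge12E. Qed.

Lemma G2_stdE B (v : 'I_3 -> 'rV[R]_7) :
  G2_std B v = g2_coord (fun s l => dual_coord B l (v (inord s))).
Proof.
rewrite {1}(nthv3E v) G2_std_nthv; apply: eq_g2_coord => s l.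
by case: s => [|[|[|//]]].
Qed.

Definition set_row c (r : 'I_3) (d : nat -> R) : nat -> nat -> R :=
  fun s l => if inord s == r then d l else c s l.

Lemma minor3_set_row_linear c r d1 d2 a i j k :
  minor3 (set_row c r (fun l => a * d1 l + d2 l)) i j k =
  a * minor3 (set_row c r d1) i j k + minor3 (set_row c r d2) i j k.
Proof.
by case: r => -[|[|[|//]]] ?; rewrite /minor3 /set_row -!val_eqE /= !inordK //=; ring.
Qed.

Lemma G2_std_multilinear B : kmultilinear (G2_std B).
Proof.
move=> v i a x y; rewrite !G2_stdE.
have E w : (fun s l => dual_coord B l (kupd v i w (inord s))) =
    set_row (fun s l => dual_coord B l (v (inord s))) i (fun l => dual_coord B l w).
  by apply: functional_extensionality => s; apply: functional_extensionality => l;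
     rewrite /kupd /set_row; case: eqP.
rewrite !E (_ : (fun l => _) = fun l => a * dual_coord B l x + dual_coord B l y); last first.
  by apply: functional_extensionality => l; rewrite dual_coordD.
by rewrite /g2_coord !minor3_set_row_linear; ring.
Qed.

Lemma minor3_eq_rows c (s t : 'I_3) :
  s != t -> (forall l, c s l = c t l) -> forall i j k, minor3 c i j k = 0.
Proof.
by case: s t => -[|[|[|//]]] ? [[|[|[|//]]] ?] //= _ st i j k; rewrite /minor3 ?st; ring.
Qed.

Lemma G2_std_alternating B : kalternating (G2_std B).
Proof.
move=> v i j ij vij; pose c s l := dual_coord B l (v (inord s)).
have rows_eq l : c i l = c j l by rewrite /c !inord_val vij.
by rewrite G2_stdE /g2_coord !(minor3_eq_rows ij rows_eq); ring.
Qed.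

Lemma G2_std_is_kform B : is_kform (G2_std B).
Proof. by split; [exact: G2_std_multilinear | exact: G2_std_alternating]. Qed.

Definition basis_vec B (p : nat) : 'rV[R]_7 := delta_mx 0 (inord p) *m invmx B.

Lemma dual_coord_basis_vec B p l : B \in unitmx -> (p < 7)%N -> (l < 7)%N ->
  dual_coord B l (basis_vec B p) = (p == l)%:R.
Proof.
move=> unitB lt_p7 lt_l7; rewrite /dual_coord /basis_vec mulmxKV // mxE eqxx /=.
by rewrite -val_eqE /= !inordK // eq_sym.
Qed.

(* The coordinates of the arguments [(X, e_p, e_q)], [Y] being those of [X]. *)
Definition contract_rows (Y : nat -> R) (p q : nat) : nat -> nat -> R :=
  fun s l => match s with 0 => Y l | 1 => (p == l)%:R | _ => (q == l)%:R end.

(* Coordinate form of [(X _| phi)^3 = 6 |X|^2 * X^b] ([*] the Hodge star), evaluated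
   on the basis vectors other than [e_j]. *)
Lemma pfaffian6_g2_contract (Y : nat -> R) j : (j < 7)%N ->
  pfaffian6 (fun a b => g2_coord (contract_rows Y (bump j a) (bump j b))) =
  (-1) ^+ j * (\sum_(l < 7) Y l ^+ 2) * Y j.
Proof.
rewrite !big_ord_recr big_ord0 /=.
by case: j => [|[|[|[|[|[|[|//]]]]]]] _;
  rewrite /pfaffian6 /pfaffian4 /g2_coord /minor3 /contract_rows /bump /=; ring.
Qed.

Lemma sum_sqr_neq0 n (Y : nat -> R) j :
  (j < n)%N -> Y j != 0 -> \sum_(l < n) Y l ^+ 2 != 0.
Proof.
move=> lt_jn; apply: contraNneq => sum0.
have := psumr_eq0P (F := fun l : 'I_n => Y l ^+ 2) (fun l _ => sqr_ge0 _) sum0.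
by move/(_ (Ordinal lt_jn) isT)/eqP; rewrite sqrf_eq0 => ->.
Qed.

Lemma dual_coord_neq0 B (X : 'rV[R]_7) :
  B \in unitmx -> X != 0 -> exists j : 'I_7, dual_coord B j X != 0.
Proof.
move=> unitB X_neq0; apply/existsP; apply: contraNT X_neq0 => /existsPn X0.
rewrite -(mulmxK unitB X) (_ : X *m B = 0) ?mul0mx //; apply/rowP => l.
by move: (X0 l); rewrite [RHS]mxE /dual_coord inord_val negbK => /eqP.
Qed.

Lemma kcube_kcontract_G2_neq0 B (X : 'rV[R]_7) :
  B \in unitmx -> X != 0 -> exists v, kcube (kcontract X (G2_std B)) v != 0.
Proof.
move=> unitB X_neq0; pose Y l := dual_coord B l X.
have [j Yj] := dual_coord_neq0 unitB X_neq0.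
have bump_lt a : (a < 6)%N -> (bump j a < 7)%N.
  by move=> lt_a6; exact: ltn_ord (lift j (Ordinal lt_a6)).
exists (nthv (mkseq (fun a => basis_vec B (bump j a)) 6)).
rewrite kcube_pfaffian; last exact/kcontract_is_kform/G2_std_is_kform.
rewrite (@eq_pfaffian6 _ _ (fun a b => g2_coord (contract_rows Y (bump j a) (bump j b)))).
  rewrite pfaffian6_g2_contract // !mulf_neq0 ?pnatr_eq0 ?signr_eq0 //.
  exact: sum_sqr_neq0 Yj.
move=> a b lt_a6 lt_b6; rewrite /ev2 kcontractE kcons_nthv G2_std_nthv.
apply: eq_g2_coord => -[|[|[|//]]] l _ lt_l7 //=.
all: by rewrite nth_mkseq // dual_coord_basis_vec // bump_lt.
Qed.

End G2.

Theorem mainTheorem6 (R : realFieldType)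
  (brg : 'rV[R]_7 -> 'rV[R]_7 -> 'rV[R]_7)
  (brh : 'rV[R]_6 -> 'rV[R]_6 -> 'rV[R]_6)
  (P : 'M[R]_(7, 6)) (X : 'rV[R]_7) :
  lie_bracket brg -> lie_bracket brh ->
  row_full P ->
  (forall x y, brg x y *m P = brh (x *m P) (y *m P)) ->
  (forall z, z *m P = 0 -> forall y, brg z y = 0) ->
  ~ (exists w : kform R 6 2, lie_symplectic brh w) ->
  X *m P = 0 -> (forall z, z *m P = 0 -> exists a : R, z = a *: X) ->
  (forall phi : kform R 7 3, is_kform phi -> ce_closed brg phi ->
     forall v, kcube (kcontract X phi) v = 0)
  /\ ~ (exists phi : kform R 7 3, lie_calibrated_G2 brg phi).
Proof.
move=> _ _ /row_fullP[Q QP] P_hom kerP_central not_symplectic XP kerP_span.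
have cube_eq0 phi : is_kform phi -> ce_closed brg phi -> forall v, kcube (kcontract X phi) v = 0.
  by move=> phiF phi_closed v; apply: (kcube_kcontract_eq0 QP XP kerP_span P_hom kerP_central).
split=> [//|[phi [[B [unitB phiE]] phi_closed]]].
have {phiE} phiE : phi = G2_std B by apply: functional_extensionality.
have [v] := kcube_kcontract_G2_neq0 unitB (ker_span_neq0 (isT : (6 < 7)%N) kerP_span).
by rewrite -phiE cube_eq0 ?eqxx // phiE; exact: G2_std_is_kform.
Qed.
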